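(* Run the algorithm Mark&Predict (described in the context) with cache size $k$, and consider one of its phases (the period from one unmarking of all pages to the next). Let $c$ be the number of new pages of this phase (distinct pages requested during the phase that were not in the cache at its start). Suppose that at the start of the phase the cache contains exactly $\eta_0$ pages whose most recent prediction is $0$ and which are incorrect (i.e., the page is not requested during this phase) and exactly $\eta_1$ pages whose most recent prediction is $1$ and which are incorrect (i.e., the page is requested during this phase). Then the expected number of page faults incurred by Mark&Predict during this phase is at most $c\,(H_{\eta_1+c}-H_c+1)+H_k\,\eta_0,$ where $H_m=\sum_{j=1}^m 1/j$ (and $H_0=0$).
   Context: Paging: there is a universe $U$ of pages and a cache holding at most $k$ pages, initially empty. Requests arrive online; if a requested page is not in the cache (a page fault), it must be loaded, evicting a cached page if the cache holds $k$ pages. Along with each request $r_i$ the algorithm receives a prediction bit $p_i\in\{0,1\}$. A page whose most recent prediction is $0$ (resp. $1$) is called a $0$-page (resp. $1$-page). Algorithm Mark&Predict: pages carry a mark. On request $r_i$: if $r_i$ is not in the cache and the cache is full, then (i) if all cached pages are marked, unmark all pages (start of a new phase); (ii) if there is an unmarked $1$-page in the cache, evict one chosen uniformly at random among unmarked $1$-pages, otherwise evict an unmarked $0$-page chosen uniformly at random; then load $r_i$. Finally (in all cases) mark $r_i$. The expectation is over the algorithm's random choices during the phase, given the cache content and predictions at the start of the phase. *)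

From mathcomp Require Import all_boot all_order all_algebra.
Set Implicit Arguments.
Unset Strict Implicit.
Unset Printing Implicit Defensive.
Import Order.TTheory GRing.Theory Num.Theory.
Local Open Scope ring_scope.

Definition harmonic (R : realFieldType) (m : nat) : R :=
  \sum_(1 <= j < m.+1) (j%:R)^-1.

Definition avg (R : realFieldType) (T : eqType) (f : T -> R) (s : seq T) : R :=
  (\sum_(q <- s) f q) / (size s)%:R.

(* Expected number of page faults of Mark&Predict with cache size k, starting
   from cache content [cache] (a duplicate-free list), set of marked pages
   [marked], current most-recent predictions [pr] (true = prediction 1), on the
   request sequence [reqs] (each request comes with its prediction bit).
   Random evictions are averaged uniformly, so this is exactly the expectation
   over the algorithm's random choices. *)
Fixpoint mp_exp_faults (R : realFieldType) (T : eqType) (k : nat)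
  (cache marked : seq T) (pr : T -> bool) (reqs : seq (T * bool)) : R :=
  match reqs with
  | [::] => 0
  | (r, b) :: rest =>
    let pr' := fun x => if x == r then b else pr x in
    if r \in cache then mp_exp_faults R k cache (r :: marked) pr' rest
    else if (size cache < k)%N then
      1 + mp_exp_faults R k (r :: cache) (r :: marked) pr' rest
    else
      let marked1 := if all (fun x => x \in marked) cache then [::] else marked in
      let unm := [seq x <- cache | x \notin marked1] in
      let U1 := [seq x <- unm | pr x] in
      let cand := if U1 != [::] then U1 else [seq x <- unm | ~~ pr x] in
      1 + avg (fun q => mp_exp_faults R k (r :: rem q cache) (r :: marked1) pr' rest)
              cand
  end.

From mathcomp Require Import all_boot all_order all_algebra.
From mathcomp Require Import zify ring lra.
Import Order.TTheory GRing.Theory Num.Theory.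
Set Implicit Arguments.
Unset Strict Implicit.
Unset Printing Implicit Defensive.

(** The proof is a potential-function argument. For a state of the phase (cache,
    marked pages, and the pages [rs] still to be requested) the potential is the
    number of distinct pages of [rs] outside the cache, plus, for each cached
    unmarked old page [q] requested later, an estimate of the probability that
    [q] is evicted before its first request: the old pages that will be missing
    by then are split between the two prediction classes, 1-pages being evicted
    first, and the evictions of [q]'s class still to come fall uniformly on the
    cached unmarked pages of that class. A hit does not increase the potential,
    and a fault lowers its average over the random victim by at least one, so the
    potential dominates the expected number of faults.

    At the start of the phase, with [b] and [e] the numbers of 1- and 0-pages of
    the cache never requested in the phase, the estimates for the [eta1]
    requested 1-pages are at most [min(c, b + j) / (b + j)], [j = 1..eta1], and
    those for the [d] requested 0-pages at most [(c - b) / (e + j)], [j = 1..d].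
    The first sum is at most [(c - b) + c (H_(c + eta1) - H_c)] (truncated
    subtraction), and since [c - b <= e = eta0], the leftover [c - b] together
    with the second sum is at most [H_k eta0]. *)

Section SeqCount.
Variable T : eqType.
Implicit Types (p : pred T) (s : seq T).

Lemma count_split p (a : pred T) s :
  count p s = count (fun y => p y && a y) s + count (fun y => p y && ~~ a y) s.
Proof. by elim: s => //= x s ->; case: (p x); case: (a x) => /=; lia. Qed.

Lemma count_rem_uniq p s z : uniq s -> z \in s ->
  count p s = count (fun y => p y && (y != z)) s + p z.
Proof.
move=> s_uniq zs; rewrite (permP (perm_to_rem zs)) /= (rem_filter _ s_uniq).
by rewrite count_filter addnC.
Qed.

Lemma count_agree_off p1 p2 s z : uniq s -> z \in s ->
  (forall y, y != z -> p1 y = p2 y) -> count p1 s + p2 z = count p2 s + p1 z.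
Proof.
move=> s_uniq zs p12.
rewrite (count_rem_uniq p1 s_uniq zs) (count_rem_uniq p2 s_uniq zs) addnAC.
congr (_ + _ + _); apply: eq_count => y.
by case: (eqVneq y z) => [->|/p12 ->]; rewrite ?andbF.
Qed.

Lemma count_undup_cons p r s :
  count p (undup (r :: s)) = p r + count (fun y => p y && (y != r)) (undup s).
Proof.
rewrite /=; case: ifP => rs.
  by rewrite addnC -count_rem_uniq ?undup_uniq ?mem_undup.
rewrite /=; congr (_ + _); apply: eq_in_count => y; rewrite mem_undup.
by case: (eqVneq y r) => [->|]; rewrite ?rs ?andbT.
Qed.

Lemma count_undup_subset p s1 s2 :
  {subset s1 <= s2} -> count p (undup s1) <= count p (undup s2).
Proof.
move=> s12; rewrite -!size_filter; apply: uniq_leq_size.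
  by rewrite filter_uniq ?undup_uniq.
by move=> x; rewrite !mem_filter !mem_undup => /andP[-> /s12 ->].
Qed.

Lemma count_subset_uniq p s1 s2 : uniq s1 -> uniq s2 -> {subset s1 <= s2} ->
  count p s1 = count (fun y => (y \in s1) && p y) s2.
Proof.
move=> s1_uniq s2_uniq s12.
have /permP -> : perm_eq s1 [seq y <- s2 | y \in s1].
  apply: uniq_perm; rewrite ?filter_uniq // => y.
  by rewrite mem_filter; case y1: (y \in s1); rewrite //= s12.
by rewrite count_filter; apply: eq_count => y /=; rewrite andbC.
Qed.

Lemma count_mem_swap s1 s2 : uniq s1 -> uniq s2 ->
  count (fun y => y \in s2) s1 = count (fun y => y \in s1) s2.
Proof.
move=> s1_uniq s2_uniq; rewrite -!size_filter; apply: perm_size.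
by apply: uniq_perm; rewrite ?filter_uniq // => y; rewrite !mem_filter andbC.
Qed.

Lemma eq_size_undup s1 s2 : s1 =i s2 -> size (undup s1) = size (undup s2).
Proof.
move=> s12; apply: perm_size; apply: uniq_perm; rewrite ?undup_uniq // => x.
by rewrite !mem_undup s12.
Qed.

Lemma notin_take_index (q : T) s : q \notin take (index q s) s.
Proof. by apply/negP => /index_ltn; rewrite ltnn. Qed.

Lemma take_index_cons (q r : T) s : q != r ->
  take (index q (r :: s)) (r :: s) = r :: take (index q s) s.
Proof. by move=> qr; rewrite /= eq_sym (negbTE qr). Qed.

End SeqCount.

Local Open Scope ring_scope.

Lemma sumr_const_count (R : nmodType) (T : Type) (P : pred T) (s : seq T) (c : R) :
  \sum_(x <- s | P x) c = c *+ count P s.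
Proof. by rewrite big_const_seq iter_addr addr0. Qed.

Lemma sumr_if_count (R : nmodType) (T : Type) (P : pred T) (s : seq T) (c : R) :
  \sum_(x <- s) (if P x then c else 0) = c *+ count P s.
Proof. by rewrite -big_mkcond sumr_const_count. Qed.

(** * Estimates with harmonic numbers *)

Section Arithmetic.
Variable R : realFieldType.
Local Notation H := (harmonic R).

Lemma harmonicS m : H m.+1 = H m + m.+1%:R^-1.
Proof. by rewrite /harmonic big_nat_recr. Qed.

Lemma harmonic_ge0 m : 0 <= H m.
Proof. by apply: sumr_ge0 => i _; rewrite invr_ge0. Qed.

Lemma harmonicD m n : H (m + n) = H m + \sum_(i < n) (m + i + 1)%:R^-1.
Proof.
elim: n => [|n IH]; first by rewrite addn0 big_ord0 addr0.
by rewrite addnS harmonicS IH big_ord_recr /= -addrA addn1.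
Qed.

Lemma ler_harmonic m n : (m <= n)%N -> H m <= H n.
Proof.
move=> /subnKC <-; rewrite harmonicD lerDl.
by apply: sumr_ge0 => i _; rewrite invr_ge0.
Qed.

Lemma harmonic_ge1 m : (0 < m)%N -> 1 <= H m.
Proof.
by move=> m_gt0; apply: le_trans (ler_harmonic m_gt0); rewrite /harmonic big_nat1 invr1.
Qed.

Definition capped_ratio_sum (c b a : nat) : R :=
  \sum_(i < a) (minn c (b + i + 1))%:R / (b + i + 1)%:R.

Lemma capped_ratio_sum_le c b a :
  capped_ratio_sum c b a <= (c - b)%:R + c%:R * (H (c + a) - H c).
Proof.
elim: a b => [|a IH] b.
  by rewrite /capped_ratio_sum big_ord0 addn0 subrr mulr0 addr0.
have c_ge0 : 0 <= c%:R :> R by [].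
case: (leqP c b) => [cb|bc].
  rewrite (eqP (cb : c - b == 0)%N) add0r harmonicD addrAC subrr add0r mulr_sumr.
  apply: ler_sum => i _; rewrite (minn_idPl _); last by lia.
  by apply: ler_wpM2l => //; rewrite lef_pV2 ?posrE ?ltr0n ?ler_nat; lia.
rewrite /capped_ratio_sum big_ord_recl /= (minn_idPr _); last by lia.
rewrite divff ?pnatr_eq0 ?addn1 //.
have -> : \sum_(i < a) (minn c (b + bump 0 i + 1))%:R / (b + bump 0 i + 1)%:R
    = capped_ratio_sum c b.+1 a.
  by apply: eq_bigr => i _; rewrite /bump /= !addnS !addSn addn0.
apply: le_trans (lerD (lexx 1) (IH b.+1)) _.
have -> : (c - b)%N = (c - b.+1).+1 by lia.
have := ler_harmonic (leqnSn (c + a)); rewrite -addnS -natr1; nra.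
Qed.

Lemma phase_bound_arith (c a b d e k : nat) : (c <= b + e)%N -> (e + d <= k)%N ->
  c%:R + capped_ratio_sum c b a + (c - b)%:R * (H (e + d) - H e)
  <= c%:R * (H (a + c) - H c + 1) + H k * e%:R.
Proof.
move=> c_le e_le; have := capped_ratio_sum_le c b a; rewrite [(c + a)%N]addnC.
have Hed : H (e + d) <= H k by exact: ler_harmonic.
have He : H e <= H (e + d) by apply: ler_harmonic; lia.
have c_ge0 : 0 <= c%:R :> R by [].
have e_ge0 : 0 <= e%:R :> R by [].
have He_ge0 := harmonic_ge0 e.
suff : (c - b)%:R * (1 + H (e + d) - H e) <= H k * e%:R :> R.
  set A := H (a + c); set X := (c - b)%:R; set Y := H (e + d).
  rewrite !(mulrDr, mulrBr, mulr1); lra.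
case: (leqP c b) => [cb|bc].
  by rewrite (eqP (cb : c - b == 0)%N) mul0r mulr_ge0 ?harmonic_ge0.
have He1 : 1 <= H e by apply: harmonic_ge1; lia.
have Xe : (c - b)%:R <= e%:R :> R by rewrite ler_nat; lia.
have X_ge0 : 0 <= (c - b)%:R :> R by [].
nra.
Qed.

Lemma ratio_step_le (n B A : nat) : (0 < B)%N -> (B <= n)%N -> (0 < A)%N ->
  (A - 1)%:R / (B - 1)%:R *+ (B - 1) + A%:R / B%:R *+ (n - B) + 1
  <= A%:R / B%:R *+ n :> R.
Proof.
move=> B_gt0 Bn A_gt0; set w := A%:R / B%:R.
have B0 : B%:R != 0 :> R by rewrite pnatr_eq0 -lt0n.
have wB : w *+ B = A%:R by rewrite -mulr_natl mulrC divfK.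
rewrite -{2}(subnK Bn) mulrnDr wB addrAC [X in _ <= X]addrC lerD2r.
case: (eqVneq B 1%N) => [->|B1]; first by rewrite subnn mulr0n add0r ler1n.
have B10 : (B - 1)%:R != 0 :> R by rewrite pnatr_eq0 subn_eq0 -ltnNge ltn_neqAle eq_sym B1.
by rewrite -mulr_natl mulrC divfK // natrB // subrK.
Qed.

End Arithmetic.

(** * A potential for one phase *)

Section Potential.
Variables (R : realFieldType) (T : eqType) (C : seq T) (pr0 : T -> bool).
Hypothesis C_uniq : uniq C.
Implicit Types (cache marked pre rs s : seq T) (b : bool) (q r x y : T).

(* The old pages are those of [C], the cache at the start of the phase; an old
   page keeps its prediction [pr0] until it is requested, i.e. marked. Let [pre]
   be the requests preceding the first request to an old page [q]. Then [holes]
   counts the old pages out of the cache once [pre] is served (each new page of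
   [pre] not yet loaded will evict an unmarked old page), [class_holes] those of
   [q]'s class, and [evict_ratio] spreads the ones not evicted yet uniformly over
   the cached unmarked pages of the class that [pre] does not request. *)

Definition old_unmarked marked b pre :=
  count (fun y => [&& y \notin marked, pr0 y == b & y \notin pre]) C.

Definition old_evicted marked cache b pre :=
  count (fun y => [&& y \notin marked, y \notin cache, pr0 y == b & y \notin pre]) C.

Definition old_cached marked cache b pre :=
  count (fun y => [&& y \in cache, y \notin marked, pr0 y == b & y \notin pre]) C.

Definition holes marked cache pre :=
  (count (fun y => (y \notin marked) && (y \notin cache)) C
   + count (fun y => (y \notin C) && (y \notin cache)) (undup pre))%N.

Definition class_holes marked cache b pre : nat :=
  let h := holes marked cache pre in
  let h1 := minn h (old_unmarked marked true pre) in
  if b then h1 else (h - h1)%N.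

Definition evict_ratio marked cache pre q : R :=
  (class_holes marked cache (pr0 q) pre - old_evicted marked cache (pr0 q) pre)%:R
  / (old_cached marked cache (pr0 q) pre)%:R.

Definition potential cache marked rs : R :=
  (count (fun y => y \notin cache) (undup rs))%:R
  + \sum_(q <- C | [&& q \in cache, q \notin marked & q \in rs])
      evict_ratio marked cache (take (index q rs) rs) q.

Lemma evict_ratio_ge0 marked cache pre q : 0 <= evict_ratio marked cache pre q.
Proof. by rewrite divr_ge0. Qed.

Lemma potential_ge0 cache marked rs : 0 <= potential cache marked rs.
Proof. by rewrite addr_ge0 ?sumr_ge0 // => q _; apply: evict_ratio_ge0. Qed.

Lemma old_unmarked_mark r marked b pre :
  old_unmarked (r :: marked) b pre = old_unmarked marked b (r :: pre).
Proof.
apply: eq_count => y; rewrite !in_cons.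
by case: (y == r); case: (y \in marked); case: (pr0 y == b); case: (y \in pre).
Qed.

Lemma old_evicted_mark r marked cache b pre :
  old_evicted (r :: marked) cache b pre = old_evicted marked cache b (r :: pre).
Proof.
apply: eq_count => y; rewrite !in_cons.
by case: (y == r); case: (y \in marked); case: (y \in cache); case: (pr0 y == b);
  case: (y \in pre).
Qed.

Lemma old_cached_mark r marked cache b pre :
  old_cached (r :: marked) cache b pre = old_cached marked cache b (r :: pre).
Proof.
apply: eq_count => y; rewrite !in_cons.
by case: (y == r); case: (y \in marked); case: (y \in cache); case: (pr0 y == b);
  case: (y \in pre).
Qed.

Lemma old_unmarked_split marked cache b pre :
  old_unmarked marked b pre
  = (old_evicted marked cache b pre + old_cached marked cache b pre)%N.
Proof.
rewrite /old_unmarked (count_split _ (fun y => y \in cache)) addnC.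
by congr (_ + _)%N; apply: eq_count => y /=;
  case: (y \in cache); case: (y \in marked); case: (pr0 y == b); case: (y \in pre).
Qed.

Section Hit.
Variables (cache marked : seq T) (r : T).
Hypothesis r_cached : r \in cache.

Lemma holes_hit pre : holes (r :: marked) cache pre = holes marked cache (r :: pre).
Proof.
rewrite /holes count_undup_cons r_cached andbF add0n; congr (_ + _)%N.
  apply: eq_count => y; rewrite in_cons.
  by case: (eqVneq y r) => [->|]; rewrite ?r_cached ?andbF.
apply: eq_count => y /=.
by case: (eqVneq y r) => [->|]; rewrite ?r_cached ?andbF ?andbT.
Qed.

Lemma evict_ratio_hit pre q :
  evict_ratio (r :: marked) cache pre q = evict_ratio marked cache (r :: pre) q.
Proof.
by rewrite /evict_ratio /class_holes holes_hit old_unmarked_mark old_evicted_mark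
  old_cached_mark.
Qed.

Lemma potential_hit rs : potential cache (r :: marked) rs <= potential cache marked (r :: rs).
Proof.
rewrite /potential count_undup_cons r_cached add0n.
rewrite (@eq_count _ _ (fun y => y \notin cache)); last first.
  by move=> y; case: (eqVneq y r) => [->|]; rewrite ?r_cached ?andbT.
rewrite lerD2l !(big_mkcond (fun q => [&& _, _ & _])) /=.
apply: ler_sum => q _; rewrite !in_cons.
case: (eqVneq q r) => [->|qr] /=; last by rewrite evict_ratio_hit.
by rewrite /= andbF; case: ifP => // _; apply: evict_ratio_ge0.
Qed.

End Hit.

Definition evict_class cache marked := has pr0 [seq y <- cache | y \notin marked].

Definition eviction_candidates cache marked :=
  [seq y <- [seq y <- cache | y \notin marked] | pr0 y == evict_class cache marked].

Lemma eviction_candidatesE cache marked pr :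
  (forall y, y \notin marked -> pr y = pr0 y) ->
  (if [seq x <- [seq x <- cache | x \notin marked] | pr x] != [::]
   then [seq x <- [seq x <- cache | x \notin marked] | pr x]
   else [seq x <- [seq x <- cache | x \notin marked] | ~~ pr x])
  = eviction_candidates cache marked.
Proof.
move=> unmarked_pred; set unm := [seq x <- cache | x \notin marked].
have pr_unm (f : bool -> bool) : [seq x <- unm | f (pr x)] = [seq x <- unm | f (pr0 x)].
  apply: eq_in_filter => y; rewrite mem_filter => /andP[ym _].
  by rewrite unmarked_pred.
rewrite (pr_unm id) (pr_unm negb) /eviction_candidates /evict_class -/unm -has_filter.
by case: (has pr0 unm); apply: eq_filter => y; case: (pr0 y).
Qed.

Lemma eviction_candidates_gt0 cache marked :
  ~~ all (fun x => x \in marked) cache -> (0 < size (eviction_candidates cache marked))%N.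
Proof.
move=> /allPn[y yc ym]; rewrite -has_predT; apply/hasP.
have yu : y \in [seq x <- cache | x \notin marked] by rewrite mem_filter ym yc.
case cls_eq: (evict_class cache marked).
  have /hasP[z zu pz] := cls_eq.
  by exists z; rewrite // mem_filter zu cls_eq pz.
exists y; rewrite // mem_filter yu andbT cls_eq eqbF_neg.
by apply: contraFN cls_eq => py; apply/hasP; exists y.
Qed.

Section Evict.
Variables (cache marked : seq T) (r : T).
Hypotheses (cache_uniq : uniq cache) (r_uncached : r \notin cache)
  (marked_cached : {subset marked <= cache})
  (unmarked_old : forall y, y \in cache -> y \notin marked -> y \in C).

Local Notation cls := (evict_class cache marked).
Local Notation cand := (eviction_candidates cache marked).

Lemma mem_eviction_candidates y :
  (y \in cand) = [&& y \in cache, y \notin marked & pr0 y == cls].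
Proof. by rewrite !mem_filter; case: (y \in cache); case: (y \in marked); case: (_ == _). Qed.

Lemma eviction_candidates_uniq : uniq cand.
Proof. by rewrite !filter_uniq. Qed.

Lemma eviction_candidates_old : {subset cand <= C}.
Proof.
by move=> y; rewrite mem_eviction_candidates => /and3P[yc ym _]; apply: unmarked_old.
Qed.

Lemma mem_evict x y : (y \in r :: rem x cache) = (y == r) || ((y != x) && (y \in cache)).
Proof. by rewrite in_cons (mem_rem_uniq x cache_uniq) inE. Qed.

Let r_unmarked : r \notin marked.
Proof. by apply: contra r_uncached; apply: marked_cached. Qed.

Section Victim.
Variable x : T.
Hypotheses (x_cached : x \in cache) (x_unmarked : x \notin marked).

Let x_old : x \in C. Proof. exact: unmarked_old. Qed.
Let x_neq_r : x != r. Proof. by apply: contraNneq r_uncached => <-. Qed.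

Lemma holes_evict pre :
  holes (r :: marked) (r :: rem x cache) pre = holes marked cache (r :: pre).
Proof.
rewrite /holes count_undup_cons.
set pm := fun y => [&& y \notin marked, y \notin cache & y != r].
have out_after : count (fun y => (y \notin r :: marked) && (y \notin r :: rem x cache)) C
          = (count pm C + 1)%N.
  have := @count_agree_off _ pm
    (fun y => (y \notin r :: marked) && (y \notin r :: rem x cache)) C x C_uniq x_old.
  rewrite mem_evict !in_cons eqxx (negbTE x_neq_r) x_unmarked /pm x_cached !andbF addn0.
  move=> -> // y yx; rewrite mem_evict in_cons yx /=.
  by case: (y == r); case: (y \in marked); case: (y \in cache).
have out_before : count (fun y => (y \notin marked) && (y \notin cache)) C
          = (count pm C + (r \in C))%N.
  case rC: (r \in C).
    have := @count_agree_off _ pm (fun y => (y \notin marked) && (y \notin cache))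
      C r C_uniq rC.
    rewrite /pm eqxx !andbF r_unmarked r_uncached addn0 => <- // y yr.
    by rewrite yr andbT.
  rewrite addn0; apply: eq_in_count => y yC.
  have yr : y != r by apply: contraTneq yC => ->; rewrite rC.
  by rewrite /pm yr andbT.
have new_after : count (fun y => (y \notin C) && (y \notin r :: rem x cache)) (undup pre)
   = count (fun y => ((y \notin C) && (y \notin cache)) && (y != r)) (undup pre).
  apply: eq_count => y; rewrite mem_evict.
  case: (eqVneq y r) => [->|yr] /=; first by rewrite !andbF.
  by case: (eqVneq y x) => [->|yx] /=; rewrite ?x_old ?andbT.
rewrite out_after out_before new_after r_uncached andbT.
by case: (r \in C); rewrite /= addnA ?addn0.
Qed.

Lemma old_evicted_evict b pre : old_evicted (r :: marked) (r :: rem x cache) b pre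
  = (old_evicted marked cache b (r :: pre) + ((pr0 x == b) && (x \notin pre)))%N.
Proof.
have := @count_agree_off _
  (fun y => [&& y \notin marked, y \notin cache, pr0 y == b & y \notin r :: pre])
  (fun y => [&& y \notin r :: marked, y \notin r :: rem x cache, pr0 y == b & y \notin pre])
  C x C_uniq x_old.
rewrite mem_evict !in_cons eqxx (negbTE x_neq_r) x_unmarked x_cached /= addn0.
rewrite /old_evicted => <- // y yx; rewrite mem_evict !in_cons yx /=.
by case: (y == r); case: (y \in marked); case: (y \in cache); case: (pr0 y == b);
  case: (y \in pre).
Qed.

Lemma old_cached_evict b pre : (old_cached (r :: marked) (r :: rem x cache) b pre
  + ((pr0 x == b) && (x \notin pre)))%N = old_cached marked cache b (r :: pre).
Proof.
have := @count_agree_off _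
  (fun y => [&& y \in r :: rem x cache, y \notin r :: marked, pr0 y == b & y \notin pre])
  (fun y => [&& y \in cache, y \notin marked, pr0 y == b & y \notin r :: pre])
  C x C_uniq x_old.
rewrite mem_evict eqxx (negbTE x_neq_r) x_cached x_unmarked in_cons (negbTE x_neq_r) /=.
rewrite addn0 => -> // y yx; rewrite mem_evict !in_cons yx /=.
by case: (y == r); case: (y \in marked); case: (y \in cache); case: (pr0 y == b);
  case: (y \in pre).
Qed.

Lemma evict_ratio_evict pre q :
  evict_ratio (r :: marked) (r :: rem x cache) pre q =
  let A := (class_holes marked cache (pr0 q) (r :: pre)
            - old_evicted marked cache (pr0 q) (r :: pre))%N in
  let B := old_cached marked cache (pr0 q) (r :: pre) in
  if (pr0 x == pr0 q) && (x \notin pre) then (A - 1)%:R / (B - 1)%:R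
  else A%:R / B%:R.
Proof.
have cached := old_cached_evict (pr0 q) pre.
rewrite /evict_ratio /class_holes holes_evict old_unmarked_mark old_evicted_evict.
case: ((pr0 x == pr0 q) && (x \notin pre)) cached => /= cached.
  by rewrite subnDA -cached addnK.
by rewrite !addn0 in cached *; rewrite cached.
Qed.

End Victim.

Lemma old_evicted_lt_holes pre :
  (old_evicted marked cache true (r :: pre) + old_evicted marked cache false (r :: pre)
   < holes marked cache (r :: pre))%N.
Proof.
set out := fun y => (y \notin marked) && (y \notin cache).
have -> : (old_evicted marked cache true (r :: pre) + old_evicted marked cache false (r :: pre))%N
    = count (fun y => out y && (y \notin r :: pre)) C.
  rewrite (count_split _ pr0); congr (_ + _)%N; apply: eq_count => y;
  by rewrite /out; case: (y \in cache); case: (y \in marked); case: (pr0 y);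
    case: (y \in r :: pre).
have out_r : count out C = (count (fun y => out y && (y != r)) C + (r \in C))%N.
  case rC: (r \in C).
    by rewrite (count_rem_uniq out C_uniq rC) /out r_unmarked r_uncached.
  rewrite addn0; apply: eq_in_count => y yC.
  by rewrite andbC; have -> : y != r by apply: contraTneq yC => ->; rewrite rC.
have : (count (fun y => out y && (y \notin r :: pre)) C <= count (fun y => out y && (y != r)) C)%N.
  by apply: sub_count => y /andP[-> ]; rewrite in_cons negb_or => /andP[].
rewrite /holes count_undup_cons r_uncached andbT out_r.
by case: (r \in C) => /=; lia.
Qed.

Lemma old_evicted_lt_class_holes pre q :
  q \in cache -> q \notin marked -> pr0 q = cls -> q \notin r :: pre ->
  (old_evicted marked cache cls (r :: pre) < class_holes marked cache cls (r :: pre))%N.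
Proof.
move=> qc qm q_cls q_pre.
have lt_holes := old_evicted_lt_holes pre.
rewrite /class_holes (old_unmarked_split _ cache).
case cls_eq: cls q_cls => q_cls.
  have : (0 < old_cached marked cache true (r :: pre))%N.
    by rewrite -has_count; apply/hasP; exists q; rewrite ?qc ?qm ?q_cls ?q_pre ?unmarked_old.
  by rewrite leq_min; lia.
have -> : old_cached marked cache true (r :: pre) = 0%N.
  apply/eqP; rewrite -leqn0 leqNgt -has_count; apply/hasP => -[y yC /and4P[yc ym py _]].
  move/negbT/hasPn: cls_eq => /(_ y).
  by rewrite mem_filter ym yc (eqP py) => /(_ isT).
rewrite addn0 (minn_idPr _); lia.
Qed.

Lemma count_eviction_candidates pre :
  count (fun x => x \notin pre) cand = old_cached marked cache cls (r :: pre).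
Proof.
rewrite (count_subset_uniq _ eviction_candidates_uniq C_uniq eviction_candidates_old).
apply: eq_count => y; rewrite mem_eviction_candidates in_cons.
case: (eqVneq y r) => [->|_]; first by rewrite (negbTE r_uncached).
by case: (y \in cache); case: (y \in marked); case: (pr0 y == cls); case: (y \in pre).
Qed.

Lemma sum_evict_ratio_le pre q : q \in cache -> q \notin marked -> q \notin pre ->
  \sum_(x <- cand) (if q != x then evict_ratio (r :: marked) (r :: rem x cache) pre q else 0)
  + (pr0 q == cls)%:R
  <= (size cand)%:R * evict_ratio marked cache (r :: pre) q.
Proof.
move=> qc qm q_pre.
have qr : q != r by apply: contraNneq r_uncached => <-.
set A := (class_holes marked cache (pr0 q) (r :: pre)
          - old_evicted marked cache (pr0 q) (r :: pre))%N.
set B := old_cached marked cache (pr0 q) (r :: pre).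
have -> : evict_ratio marked cache (r :: pre) q = A%:R / B%:R by [].
case: (eqVneq (pr0 q) cls) => q_cls; last first.
  rewrite addr0 (eq_big_seq (fun _ => A%:R / B%:R)).
    by rewrite sumr_const_count count_predT (mulr_natl (A%:R / B%:R)) lexx.
  move=> x; rewrite mem_eviction_candidates => /and3P[xc xm /eqP x_cls].
  have -> : q != x by apply: contra_neq q_cls => ->.
  by rewrite evict_ratio_evict // x_cls eq_sym (negbTE q_cls).
have q_cand : q \in cand by rewrite mem_eviction_candidates qc qm q_cls eqxx.
rewrite (eq_big_seq (fun x => (if (x != q) && (x \notin pre) then (A - 1)%:R / (B - 1)%:R
                              else 0) + (if x \in pre then A%:R / B%:R else 0))); last first.
  move=> x; rewrite mem_eviction_candidates => /and3P[xc xm /eqP x_cls].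
  rewrite evict_ratio_evict // x_cls -q_cls eqxx /= eq_sym.
  case: (eqVneq x q) => [->|_]; first by rewrite (negbTE q_pre) addr0.
  by case: (x \in pre); rewrite ?addr0 ?add0r.
have cached_cand : count (fun x => x \notin pre) cand = B.
  by rewrite count_eviction_candidates /B q_cls.
have B_gt0 : (0 < B)%N by rewrite -cached_cand -has_count; apply/hasP; exists q.
have B_le : (B <= size cand)%N by rewrite -cached_cand count_size.
have A_gt0 : (0 < A)%N.
  by rewrite /A subn_gt0 q_cls (old_evicted_lt_class_holes qc qm) // in_cons negb_or qr.
have other_cand : count (fun x => (x != q) && (x \notin pre)) cand = (B - 1)%N.
  rewrite -cached_cand (count_rem_uniq (fun x => x \notin pre) eviction_candidates_uniq q_cand).
  rewrite q_pre addn1 subn1 /=.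
  by apply: eq_count => y; rewrite andbC.
have pre_cand : count (fun x => x \in pre) cand = (size cand - B)%N.
  by rewrite -cached_cand -(count_predC (fun x => x \in pre) cand) addnK.
rewrite big_split /= !sumr_if_count other_cand pre_cand.
rewrite (mulr_natl (A%:R / B%:R)).
exact: ratio_step_le.
Qed.

Lemma potential_fault rs : potential cache marked (r :: rs) =
  1 + (count (fun y => (y \notin cache) && (y != r)) (undup rs))%:R
  + \sum_(q <- C | [&& q \in cache, q \notin marked & q \in rs])
      evict_ratio marked cache (r :: take (index q rs) rs) q.
Proof.
rewrite /potential count_undup_cons r_uncached add1n -natr1 [_ + 1]addrC.
congr (_ + _); apply: eq_big => q.
  by rewrite in_cons; case: (eqVneq q r) => [->|]; rewrite ?(negbTE r_uncached).
move=> /and3P[qc _ _]; rewrite take_index_cons //.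
by apply: contraNneq r_uncached => <-.
Qed.

Lemma potential_evicted rs x : x \in cand ->
  potential (r :: rem x cache) (r :: marked) rs =
  (count (fun y => (y \notin cache) && (y != r)) (undup rs))%:R + (x \in rs)%:R
  + \sum_(q <- C | [&& q \in cache, q \notin marked & q \in rs])
      (if q != x then evict_ratio (r :: marked) (r :: rem x cache) (take (index q rs) rs) q
       else 0).
Proof.
rewrite mem_eviction_candidates => /and3P[xc xm _].
rewrite /potential -natrD -big_mkcondr; congr (_%:R + _).
  rewrite (count_split _ (fun y => y == x)) addnC; congr (_ + _)%N.
    apply: eq_count => y /=; rewrite mem_evict.
    case: (eqVneq y r) => [->|yr] /=; first by rewrite !andbF.
    by case: (eqVneq y x) => [->|yx] /=; rewrite ?xc ?andbT.
  have -> : ((x \in rs) : nat) = count_mem x (undup rs).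
    by rewrite count_uniq_mem ?undup_uniq ?mem_undup.
  apply: eq_count => y /=; case: (eqVneq y x) => [->|]; rewrite ?andbF //.
  by rewrite mem_evict eqxx orbF andbT; apply: contraNneq r_uncached => <-.
apply: eq_bigl => q; rewrite mem_evict in_cons.
case: (eqVneq q r) => [->|qr] /=; first by rewrite (negbTE r_uncached).
by case: (q != x); case: (q \in cache); case: (q \in marked); case: (q \in rs).
Qed.

Lemma potential_evict_avg rs :
  \sum_(x <- cand) potential (r :: rem x cache) (r :: marked) rs
  <= (size cand)%:R * (potential cache marked (r :: rs) - 1).
Proof.
set Pq := fun q => [&& q \in cache, q \notin marked & q \in rs].
rewrite potential_fault (eq_big_seq _ (potential_evicted rs)) !big_split /=.
rewrite sumr_const_count count_predT (addrC 1) (addrAC _ 1) addrK mulrDr.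
rewrite (mulr_natl _ (size cand)) -addrA lerD2l.
have -> : \sum_(x <- cand) (x \in rs)%:R = \sum_(q <- C | Pq q) (pr0 q == cls)%:R :> R.
  have nat_if (b : bool) : b%:R = (if b then 1 else 0) :> R by case: b.
  rewrite !(eq_bigr _ (fun y _ => nat_if _)) sumr_if_count -big_mkcondr sumr_const_count.
  congr (_ *+ _).
  rewrite (count_subset_uniq _ eviction_candidates_uniq C_uniq eviction_candidates_old).
  apply: eq_count => y; rewrite mem_eviction_candidates /Pq.
  by case: (y \in cache); case: (y \in marked); case: (y \in rs); case: (pr0 y == cls).
rewrite (exchange_big _ cand C xpredT Pq) -big_split mulr_sumr /=.
apply: ler_sum => q /and3P[qc qm _].
by rewrite addrC sum_evict_ratio_le ?notin_take_index.
Qed.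

End Evict.

(** * The potential dominates the expected number of faults *)

Variable k : nat.

Record phase_state cache marked (pr : T -> bool) rs : Prop := PhaseState {
  state_cache_uniq : uniq cache;
  state_cache_size : size cache = k;
  state_marked_cached : {subset marked <= cache};
  state_unmarked_old : forall y, y \in cache -> y \notin marked -> y \in C;
  state_unmarked_pred : forall y, y \notin marked -> pr y = pr0 y;
  state_phase_size : (size (undup (marked ++ rs)) <= k)%N }.

Section Step.
Variables (cache marked : seq T) (pr : T -> bool) (r : T) (b : bool) (rs : seq T).
Hypothesis state : phase_state cache marked pr (r :: rs).
Local Notation pr' := (fun x => if x == r then b else pr x).

Lemma unmarked_pred_mark y : y \notin r :: marked -> pr' y = pr0 y.
Proof.
rewrite in_cons negb_or => /andP[yr ym]; rewrite (negbTE yr).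
exact: state_unmarked_pred state _ ym.
Qed.

Lemma phase_size_mark : (size (undup ((r :: marked) ++ rs)) <= k)%N.
Proof.
rewrite -(eq_size_undup (s1 := marked ++ r :: rs)) ?(state_phase_size state) // => y.
by rewrite /= !(in_cons, mem_cat); case: (y == r); case: (y \in marked).
Qed.

Lemma phase_state_hit : r \in cache -> phase_state cache (r :: marked) pr' rs.
Proof.
case: state => cache_uniq cache_size marked_cached unmarked_old _ _ rc.
split=> //; last exact: phase_size_mark; last exact: unmarked_pred_mark.
  by move=> y; rewrite in_cons => /orP[/eqP->|/marked_cached].
by move=> y yc; rewrite in_cons negb_or => /andP[_]; apply: unmarked_old.
Qed.

Lemma phase_state_unmarked : r \notin cache -> ~~ all (fun x => x \in marked) cache.
Proof.
case: state => cache_uniq cache_size _ _ _ phase_size rnc; apply/allP => all_marked.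
have : (size (r :: cache) <= size (undup (marked ++ r :: rs)))%N.
  apply: uniq_leq_size; first by rewrite /= rnc cache_uniq.
  move=> y; rewrite in_cons mem_undup mem_cat in_cons.
  by case/orP=> [->|/all_marked ->]; rewrite ?orbT.
by rewrite /= cache_size => /leq_trans/(_ phase_size); rewrite ltnn.
Qed.

Lemma phase_state_evict q : r \notin cache -> q \in eviction_candidates cache marked ->
  phase_state (r :: rem q cache) (r :: marked) pr' rs.
Proof.
case: state => cache_uniq cache_size marked_cached unmarked_old _ _ rnc.
rewrite mem_eviction_candidates => /and3P[qc qm _].
split; last exact: phase_size_mark; last exact: unmarked_pred_mark.
- by rewrite /= rem_uniq // andbT; apply: contra rnc; apply: mem_rem.
- by rewrite /= size_rem // prednK // -has_predT; apply/hasP; exists q.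
- move=> y; rewrite in_cons => /orP[/eqP->|ym]; first exact: mem_head.
  rewrite (mem_evict _ cache_uniq) (marked_cached _ ym) andbT orbC.
  by apply/orP; left; apply: contraNneq qm => <-.
- move=> y; rewrite (mem_evict _ cache_uniq) in_cons negb_or.
  by case/orP=> [/eqP->|/andP[_ yc] /andP[_]]; [rewrite eqxx | apply: unmarked_old].
Qed.

End Step.

Lemma expected_faults_le_potential reqs cache marked pr :
  phase_state cache marked pr (map fst reqs) ->
  mp_exp_faults R k cache marked pr reqs <= potential cache marked (map fst reqs).
Proof.
elim: reqs cache marked pr => [|[r b] reqs IH] cache marked pr state /=.
  exact: potential_ge0.
case: ifP => rc.
  by apply: le_trans (IH _ _ _ (phase_state_hit b state rc)) _; apply: potential_hit.
have rnc : r \notin cache by rewrite rc.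
have unmarked := phase_state_unmarked state rnc.
rewrite (state_cache_size state) ltnn (negbTE unmarked) /=.
rewrite (eviction_candidatesE cache (state_unmarked_pred state)) /avg.
have cand_gt0 : 0 < (size (eviction_candidates cache marked))%:R :> R.
  by rewrite ltr0n eviction_candidates_gt0.
rewrite addrC -lerBrDr ler_pdivrMr // mulrC.
apply: le_trans (potential_evict_avg (state_cache_uniq state) rnc
  (state_marked_cached state) (state_unmarked_old state) _).
rewrite !big_seq; apply: ler_sum => q q_cand; apply: IH.
exact: phase_state_evict.
Qed.

(** * The potential at the start of the phase *)

Definition new_pages s := count (fun y => y \notin C) (undup s).

Definition requested_old b (pre0 : seq T) rs :=
  count (fun y => [&& pr0 y == b, y \in rs & y \notin pre0]) C.

Definition unrequested_old b s := count (fun y => (pr0 y == b) && (y \notin s)) C.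

Lemma holes_start pre : holes [::] C pre = new_pages pre.
Proof.
rewrite /holes (@eq_in_count _ _ pred0) ?count_pred0 => [|y /= ->] //.
by apply: eq_count => y; rewrite andbb.
Qed.

Lemma old_evicted_start b pre : old_evicted [::] C b pre = 0%N.
Proof. by rewrite /old_evicted (@eq_in_count _ _ pred0) ?count_pred0 => // y /= ->. Qed.

Lemma old_cached_start b pre : old_cached [::] C b pre = unrequested_old b pre.
Proof. by apply: eq_in_count => y /= ->. Qed.

Lemma evict_ratio_start pre q : evict_ratio [::] C pre q =
  (if pr0 q then minn (new_pages pre) (unrequested_old true pre)
   else new_pages pre - minn (new_pages pre) (unrequested_old true pre))%N%:R
  / (unrequested_old (pr0 q) pre)%:R.
Proof.
by rewrite /evict_ratio /class_holes old_evicted_start old_cached_start holes_start subn0.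
Qed.

Lemma unrequested_old_cat b pre0 rs : unrequested_old b pre0
  = (requested_old b pre0 rs + unrequested_old b (pre0 ++ rs))%N.
Proof.
rewrite /unrequested_old (count_split _ (fun y => y \in rs)); congr (_ + _)%N;
  apply: eq_count => y; rewrite ?mem_cat;
  by case: (pr0 y == b); case: (y \in rs); case: (y \in pre0).
Qed.

Lemma requested_old_cons b pre0 r rs : requested_old b pre0 (r :: rs)
  = (requested_old b (rcons pre0 r) rs + [&& r \in C, r \notin pre0 & pr0 r == b])%N.
Proof.
case rC: (r \in C); last first.
  rewrite addn0; apply: eq_in_count => y yC; rewrite in_cons mem_rcons in_cons.
  have yr : (y == r) = false by apply/negbTE; apply: contraTneq yC => ->; rewrite rC.
  by rewrite yr.
rewrite /requested_old (count_rem_uniq _ C_uniq rC); congr (_ + _)%N.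
  apply: eq_count => y; rewrite in_cons mem_rcons in_cons.
  by case: (eqVneq y r) => [->|_]; rewrite ?andbF ?andbT.
by rewrite mem_head /=; case: (pr0 r == b); case: (r \in pre0).
Qed.

(* [pre0] is the already scanned part of the phase; generalizing over it makes
   the induction on [rs] go through. *)
Definition pending_ratio_sum (pre0 : seq T) rs : R :=
  \sum_(q <- C | (q \in rs) && (q \notin pre0))
    evict_ratio [::] C (pre0 ++ take (index q rs) rs) q.

Lemma pending_ratio_sum_cons pre0 r rs : pending_ratio_sum pre0 (r :: rs) =
  (if (r \in C) && (r \notin pre0) then evict_ratio [::] C pre0 r else 0)
  + pending_ratio_sum (rcons pre0 r) rs.
Proof.
rewrite /pending_ratio_sum !(big_mkcond (fun q => _ && _)).
have other q : q != r ->
  (if (q \in r :: rs) && (q \notin pre0)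
   then evict_ratio [::] C (pre0 ++ take (index q (r :: rs)) (r :: rs)) q else 0)
  = (if (q \in rs) && (q \notin rcons pre0 r)
     then evict_ratio [::] C (rcons pre0 r ++ take (index q rs) rs) q else 0).
  move=> qr; rewrite in_cons mem_rcons in_cons (negbTE qr) /= take_index_cons //.
  by rewrite cat_rcons.
case rC: (r \in C); last first.
  rewrite add0r; apply: eq_big_seq => q qC; apply: other.
  by apply: contraTneq qC => ->; rewrite rC.
rewrite (bigD1_seq r rC C_uniq) (bigD1_seq r rC C_uniq) /= eqxx take0 cats0.
rewrite mem_head mem_rcons mem_head /= andbF add0r.
by congr (_ + _); apply: eq_bigr => q; apply: other.
Qed.

Section StartStep.
Variables (pre0 rs : seq T) (r : T).
Hypotheses (r_old : r \in C) (r_fresh : r \notin pre0).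
Local Notation s := (pre0 ++ r :: rs).

Lemma new_pages_prefix_le : (new_pages pre0 <= new_pages s)%N.
Proof. by apply: count_undup_subset => y y_pre0; rewrite mem_cat y_pre0. Qed.

Lemma evict_ratio_start_pred1 : pr0 r ->
  evict_ratio [::] C pre0 r
  <= (minn (new_pages s) (unrequested_old true s + requested_old true pre0 (r :: rs)))%:R
     / (unrequested_old true s + requested_old true pre0 (r :: rs))%:R.
Proof.
move=> pr_r; rewrite evict_ratio_start pr_r (unrequested_old_cat _ _ (r :: rs)) addnC.
by rewrite ler_wpM2r ?invr_ge0 // ler_nat; have := new_pages_prefix_le; lia.
Qed.

Lemma evict_ratio_start_pred0 : ~~ pr0 r ->
  evict_ratio [::] C pre0 r <= (new_pages s - unrequested_old true s)%:R
    / (unrequested_old false s + requested_old false pre0 (r :: rs))%:R.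
Proof.
move=> /negbTE pr_r; rewrite evict_ratio_start pr_r.
rewrite (unrequested_old_cat true pre0 (r :: rs)) (unrequested_old_cat false pre0 (r :: rs)).
rewrite [(requested_old false _ _ + _)%N]addnC.
by rewrite ler_wpM2r ?invr_ge0 // ler_nat; have := new_pages_prefix_le; lia.
Qed.

End StartStep.

Lemma pending_ratio_sum_le rs pre0 :
  pending_ratio_sum pre0 rs
  <= capped_ratio_sum R (new_pages (pre0 ++ rs)) (unrequested_old true (pre0 ++ rs))
       (requested_old true pre0 rs)
     + (new_pages (pre0 ++ rs) - unrequested_old true (pre0 ++ rs))%:R
       * (harmonic R (unrequested_old false (pre0 ++ rs) + requested_old false pre0 rs)
          - harmonic R (unrequested_old false (pre0 ++ rs))).
Proof.
elim: rs pre0 => [|r rs IH] pre0 /=.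
  rewrite /pending_ratio_sum big_pred0 => [|q]; last by rewrite in_nil.
  have none b : requested_old b pre0 [::] = 0%N.
    by rewrite /requested_old (@eq_count _ _ pred0) ?count_pred0 // => y; rewrite in_nil andbF.
  by rewrite !none /capped_ratio_sum big_ord0 addn0 subrr mulr0 addr0.
have := IH (rcons pre0 r); rewrite cat_rcons pending_ratio_sum_cons !requested_old_cons.
set c := new_pages _; set b1 := unrequested_old true _; set e := unrequested_old false _.
set a := requested_old true _ rs; set d := requested_old false _ rs => IH'.
case: ifP => [/andP[rC r_fresh]|r_stale]; last first.
  by rewrite !andbA r_stale /= !addn0 add0r.
rewrite rC r_fresh /=; case pr_r: (pr0 r) => /=.
  rewrite addn1 addn0 /capped_ratio_sum big_ord_recr /= -/(capped_ratio_sum R c b1 a).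
  have := evict_ratio_start_pred1 rs rC r_fresh pr_r.
  rewrite requested_old_cons rC r_fresh pr_r /= -/c -/b1 -/a addnA; move: IH'; lra.
rewrite addn0 addn1 addnS harmonicS.
have := evict_ratio_start_pred0 rs rC r_fresh (negbT pr_r).
rewrite requested_old_cons rC r_fresh pr_r /= -/c -/b1 -/e -/d addn1 addnS => ratio_le.
rewrite (_ : _ * (_ + _ - _) = (c - b1)%:R * (harmonic R (e + d) - harmonic R e)
                               + (c - b1)%:R / (e + d).+1%:R); last by ring.
by rewrite addrA [X in _ <= X]addrC lerD.
Qed.

Lemma potential_start rs : potential C [::] rs = (new_pages rs)%:R + pending_ratio_sum [::] rs.
Proof.
rewrite /potential /pending_ratio_sum; congr (_ + _).
rewrite big_seq_cond [RHS]big_seq_cond; apply: eq_bigl => q.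
by rewrite in_nil; case: (q \in C); case: (q \in rs).
Qed.

Lemma size_old_split rs : size C =
  (requested_old true [::] rs + unrequested_old true rs
   + (requested_old false [::] rs + unrequested_old false rs))%N.
Proof.
rewrite -!(unrequested_old_cat _ [::]) -(count_predT C) (count_split _ pr0).
by congr (_ + _)%N; apply: eq_count => y; rewrite in_nil andbT; case: (pr0 y).
Qed.

Lemma size_undup_split rs : size (undup rs) =
  (new_pages rs + requested_old true [::] rs + requested_old false [::] rs)%N.
Proof.
rewrite -(count_predC (fun y => y \notin C)) -addnA; congr (_ + _)%N.
rewrite (@eq_count _ _ (fun y => y \in C)) => [|y]; last by rewrite /= negbK.
rewrite count_mem_swap ?undup_uniq // (count_split _ pr0).
by congr (_ + _)%N; apply: eq_count => y; rewrite mem_undup in_nil andbT andbC;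
  case: (pr0 y).
Qed.

End Potential.

Theorem lemma1 (R : realFieldType) (T : eqType) (k : nat)
  (C : seq T) (pr0 : T -> bool) (sigma : seq (T * bool)) (next : option T) :
  uniq C -> size C = k ->
  (exists r b rest, sigma = (r, b) :: rest /\ r \notin C) ->
  (size (undup (map fst sigma)) <= k)%N ->
  (forall p, next = Some p ->
     p \notin map fst sigma /\ size (undup (map fst sigma)) = k) ->
  let P := undup (map fst sigma) in
  let c := count (fun x => x \notin C) P in
  let eta0 := count (fun x => ~~ pr0 x && (x \notin P)) C in
  let eta1 := count (fun x => pr0 x && (x \in P)) C in
  mp_exp_faults R k C [::] pr0 sigma
    <= c%:R * (harmonic R (eta1 + c) - harmonic R c + 1) + harmonic R k * eta0%:R.
Proof.
move=> C_uniq size_C _ phase_size _; cbv zeta.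
set rs := map fst sigma in phase_size *.
have start : phase_state C pr0 k C [::] pr0 rs by split.
apply: le_trans (expected_faults_le_potential R C_uniq start) _.
have -> : count (fun x => pr0 x && (x \in undup rs)) C = requested_old C pr0 true [::] rs.
  by apply: eq_count => y; rewrite mem_undup in_nil /= eqb_id andbT.
have -> : count (fun x => ~~ pr0 x && (x \notin undup rs)) C = unrequested_old C pr0 false rs.
  by apply: eq_count => y; rewrite mem_undup eqbF_neg.
have := pending_ratio_sum_le R pr0 C_uniq rs [::].
have := size_old_split C pr0 rs; have := size_undup_split pr0 C_uniq rs.
rewrite potential_start => rs_split C_split; rewrite cat0s => pending_le.
have c_le : (new_pages C rs
              <= unrequested_old C pr0 true rs + unrequested_old C pr0 false rs)%N by lia.
have e_le : (unrequested_old C pr0 false rs + requested_old C pr0 false [::] rs <= k)%N.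
  by lia.
apply: le_trans (@phase_bound_arith R _ _ _ _ _ _ c_le e_le).
by rewrite -addrA lerD2l.
Qed.
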